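(* Let $\sigma\in\Sigma$. The following are equivalent: (i) $A^\sigma_W=A_W$; (ii) for every proper face $\tau$ of $\sigma$ there exists $u\in\tau^\perp_{W^*}$ with $\rho_N(u)=1$ for all $\rho\in\sigma_1\setminus\tau_1$; (iii) for every $\tau\in\Sigma$ there exists $u\in(\sigma\cap\tau)^\perp_{W^*}$ with $\rho_N(u)=1$ for all $\rho\in\sigma_1\setminus\tau_1$; (iv) $\sigma$ is $W$-regular.
   Context: Let $R\subseteq\mathbb{R}$ be a principal ideal subring. Let $V$ be a real vector space of finite dimension $n$, let $N\subseteq V$ be a lattice (a free $\mathbb{Z}$-submodule of rank $n$ spanning $V$), and let $W\subseteq V$ be the $R$-submodule generated by $N$. Put $W^*=\{u\in V^*\mid u(W)\subseteq R\}$. An $N$-fan is a finite set $\Sigma$ of sharp (containing no line) polyhedral cones in $V$, each the conic hull of a finite subset of $N$, such that every face of a cone of $\Sigma$ lies in $\Sigma$ and the intersection of two cones of $\Sigma$ is a face of each. For a cone $\sigma$ put $\sigma^\perp=\{u\in V^*\mid u(\sigma)=0\}$, $\sigma^\perp_{W^*}=\sigma^\perp\cap W^*$. Let $\Sigma_1$ be the set of rays of $\Sigma$ and $\sigma_1$ the set of rays that are faces of $\sigma$. For $\rho\in\Sigma_1$ let $\rho_N$ be the primitive generator of $N\cap\rho$, viewed as the linear form $W^*\to R$, $m\mapsto m(\rho_N)$. Let $c_W\colon W^*\to R^{\Sigma_1}$, $m\mapsto(\rho_N(m))_\rho$, let $a_W\colon R^{\Sigma_1}\to A_W$ be its cokernel,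 $\alpha_\rho=a_W(\delta_\rho)$ for the standard basis $(\delta_\rho)$, and for $\sigma\in\Sigma$ let $A^\sigma_W$ be the submodule generated by $\{\alpha_\rho\mid\rho\in\Sigma_1\setminus\sigma_1\}$. A cone $\sigma$ is $W$-regular if it is the conic hull of a subset of $W$ contained in an $R$-basis of $W$. *)

(* V = K^n as row vectors, V^* = K^n as column vectors,
   with K an arbitrary real (ordered) field generalizing the reals. *)
From HB Require Import structures.
From mathcomp Require Import all_boot all_order all_algebra.
Unset Printing Implicit Defensive.
Import Order.TTheory GRing.Theory Num.Theory.
Local Open Scope ring_scope.

Section Defs.
Context {K : realFieldType} {n : nat}.

Definition vset := 'rV[K]_n -> Prop.
Definition set_eq (A B : vset) : Prop := forall x, A x <-> B x.
Definition setI (A B : vset) : vset := fun x => A x /\ B x.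

Definition pairing (v : 'rV[K]_n) (u : 'cV[K]_n) : K := (v *m u) 0 0.

Definition cone (g : seq 'rV[K]_n) : vset := fun x =>
  exists l : 'I_(size g) -> K,
    (forall i, 0 <= l i) /\ x = \sum_(i < size g) l i *: g`_i.

Definition sharp (A : vset) : Prop := forall x, A x -> A (- x) -> x = 0.

Definition perp (A : vset) (u : 'cV[K]_n) : Prop := forall x, A x -> pairing x u = 0.

Definition is_face (T S : vset) : Prop :=
  exists u : 'cV[K]_n, (forall x, S x -> 0 <= pairing x u) /\
     set_eq T (fun x => S x /\ pairing x u = 0).

Definition is_subring (Rp : K -> Prop) : Prop :=
  [/\ Rp 0, Rp 1, (forall x y, Rp x -> Rp y -> Rp (x - y))
    & (forall x y, Rp x -> Rp y -> Rp (x * y))].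
Definition is_ideal (Rp : K -> Prop) (I : K -> Prop) : Prop :=
  [/\ (forall x, I x -> Rp x), I 0, (forall x y, I x -> I y -> I (x + y))
    & (forall r x, Rp r -> I x -> I (r * x))].
Definition principal_ideal_subring (Rp : K -> Prop) : Prop :=
  is_subring Rp /\
  forall I, is_ideal Rp I ->
    exists g, Rp g /\ forall x, I x <-> exists r, Rp r /\ x = r * g.

(* The lattice N is given by a Z-basis: the rows of an invertible matrix B. *)
Definition inN (B : 'M[K]_n) (v : 'rV[K]_n) : Prop :=
  exists z : 'rV[int]_n, v = map_mx (fun a : int => a%:~R) z *m B.
(* W = R-submodule generated by N *)
Definition inW (Rp : K -> Prop) (B : 'M[K]_n) (v : 'rV[K]_n) : Prop :=
  exists x : 'rV[K]_n, (forall i, Rp (x 0 i)) /\ v = x *m B.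
Definition inWdual (Rp : K -> Prop) (B : 'M[K]_n) (u : 'cV[K]_n) : Prop :=
  forall w, inW Rp B w -> Rp (pairing w u).

(* A fan is a finite set of cones, given by a list S of generator lists
   (cone number i is cone_of S i). *)
Definition cone_of (S : seq (seq 'rV[K]_n)) (i : 'I_(size S)) : vset :=
  cone (nth [::] S i).

Definition is_Nfan (B : 'M[K]_n) (S : seq (seq 'rV[K]_n)) : Prop :=
  [/\ (forall (i : 'I_(size S)) v, v \in nth [::] S i -> inN B v),
      (forall i, sharp (cone_of S i)),
      (forall i (T : vset), is_face T (cone_of S i) ->
          exists j, set_eq (cone_of S j) T),
      (forall i j, is_face (setI (cone_of S i) (cone_of S j)) (cone_of S i) /\
                   is_face (setI (cone_of S i) (cone_of S j)) (cone_of S j))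
    & (* it is a set: distinct indices are distinct cones *)
      (forall i j, set_eq (cone_of S i) (cone_of S j) -> i = j)].

Definition is_ray (S : seq (seq 'rV[K]_n)) (i : 'I_(size S)) : Prop :=
  exists v, v != 0 /\ set_eq (cone_of S i) (cone [:: v]).
Definition ray_of (S : seq (seq 'rV[K]_n)) (i : 'I_(size S)) (T : vset) : Prop :=
  is_ray S i /\ is_face (cone_of S i) T.

Definition primitive_gen (B : 'M[K]_n) (A : vset) (v : 'rV[K]_n) : Prop :=
  [/\ inN B v, A v, v != 0 &
      forall w, inN B w -> A w -> exists k : nat, w = k%:R *: v].
Definition prim_gens (B : 'M[K]_n) (S : seq (seq 'rV[K]_n))
  (gen : 'I_(size S) -> 'rV[K]_n) : Prop :=
  forall i, is_ray S i -> primitive_gen B (cone_of S i) (gen i).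

Definition rhoN (S : seq (seq 'rV[K]_n)) (gen : 'I_(size S) -> 'rV[K]_n)
  (i : 'I_(size S)) (u : 'cV[K]_n) : K := pairing (gen i) u.

(* (i) A^sigma_W = A_W, with A_W = coker (c_W : W^* -> R^{Sigma_1}) unfolded:
   every y in R^{Sigma_1} is, modulo the image of c_W, an R-combination of the
   delta_rho with rho not in sigma_1.  Elements of R^{Sigma_1} are encoded as
   functions on all indices, only the values at rays mattering. *)
Definition A_sigma_eq_A (Rp : K -> Prop) (B : 'M[K]_n) (S : seq (seq 'rV[K]_n))
  (gen : 'I_(size S) -> 'rV[K]_n) (s : 'I_(size S)) : Prop :=
  forall y : 'I_(size S) -> K, (forall r, is_ray S r -> Rp (y r)) ->
  exists (c : 'I_(size S) -> K) (m : 'cV[K]_n),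
    [/\ inWdual Rp B m,
        (forall r, is_ray S r -> Rp (c r)),
        (forall r, ray_of S r (cone_of S s) -> c r = 0)
      & (forall r, is_ray S r -> y r = c r + rhoN S gen r m)].

Definition cond_ii (Rp : K -> Prop) (B : 'M[K]_n) (S : seq (seq 'rV[K]_n))
  (gen : 'I_(size S) -> 'rV[K]_n) (s : 'I_(size S)) : Prop :=
  forall T : vset, is_face T (cone_of S s) -> ~ set_eq T (cone_of S s) ->
  exists u, [/\ perp T u, inWdual Rp B u &
    forall r, ray_of S r (cone_of S s) -> ~ ray_of S r T -> rhoN S gen r u = 1].

Definition cond_iii (Rp : K -> Prop) (B : 'M[K]_n) (S : seq (seq 'rV[K]_n))
  (gen : 'I_(size S) -> 'rV[K]_n) (s : 'I_(size S)) : Prop :=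
  forall t : 'I_(size S),
  exists u, [/\ perp (setI (cone_of S s) (cone_of S t)) u, inWdual Rp B u &
    forall r, ray_of S r (cone_of S s) -> ~ ray_of S r (cone_of S t) ->
      rhoN S gen r u = 1].

Definition is_R_basis (Rp : K -> Prop) (B : 'M[K]_n) (e : seq 'rV[K]_n) : Prop :=
  [/\ (forall v, v \in e -> inW Rp B v),
      (forall w, inW Rp B w -> exists r : 'I_(size e) -> K,
          (forall i, Rp (r i)) /\ w = \sum_(i < size e) r i *: e`_i)
    & (forall r : 'I_(size e) -> K, (forall i, Rp (r i)) ->
          \sum_(i < size e) r i *: e`_i = 0 -> forall i, r i = 0)].

Definition W_regular (Rp : K -> Prop) (B : 'M[K]_n) (A : vset) : Prop :=
  exists e : seq 'rV[K]_n, is_R_basis Rp B e /\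
  exists s : seq 'rV[K]_n, {subset s <= e} /\ set_eq A (cone s).

End Defs.

(* Everything is compared with the auxiliary condition (ray_duals)
     (D) there are m_rho in W^*, for the rays rho of sigma, such that
         rho'_N(m_rho) = delta_{rho rho'} for all rays rho' of sigma.
   (i) <-> (D) unfolds the cokernel A_W; (ii) -> (D) uses the faces {0} and
   rho of sigma; (D) -> (iii) sums duals, since the face sigma cap tau is
   generated by rays common to sigma and tau; (iii) -> (ii) since the faces of
   sigma are cones of the fan; (D) -> (iv) completes the rho_N by a basis of
   the submodule of W killed by the m_rho, which is free because R is a PID;
   (iv) -> (D) rescales coordinate functionals of the R-basis, the factor
   lying in R because rho_N is primitive in N. *)

From Pilot Require Import Defs.
From HB Require Import structures.
From mathcomp Require Import all_boot all_order all_algebra.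
From mathcomp Require Import zify.
From Stdlib Require Import Classical ClassicalEpsilon.
Set Implicit Arguments. Unset Strict Implicit. Unset Printing Implicit Defensive.
Import Order.TTheory GRing.Theory Num.Theory.
Local Open Scope ring_scope.

Section Pairing.
Context {K : realFieldType} {n : nat}.
Implicit Types (x y : 'rV[K]_n) (u : 'cV[K]_n).

Lemma pairingDl x y u : pairing (x + y) u = pairing x u + pairing y u.
Proof. by rewrite /pairing mulmxDl mxE. Qed.
Lemma pairingZl a x u : pairing (a *: x) u = a * pairing x u.
Proof. by rewrite /pairing -scalemxAl mxE. Qed.
Lemma pairingDr x u1 u2 : pairing x (u1 + u2) = pairing x u1 + pairing x u2.
Proof. by rewrite /pairing mulmxDr mxE. Qed.
Lemma pairingZr a x u : pairing x (a *: u) = a * pairing x u.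
Proof. by rewrite /pairing -scalemxAr mxE. Qed.
Lemma pairingNl x u : pairing (- x) u = - pairing x u.
Proof. by rewrite -scaleN1r pairingZl mulN1r. Qed.
Lemma pairingNr x u : pairing x (- u) = - pairing x u.
Proof. by rewrite -scaleN1r pairingZr mulN1r. Qed.
Lemma pairingBl x y u : pairing (x - y) u = pairing x u - pairing y u.
Proof. by rewrite pairingDl pairingNl. Qed.
Lemma pairingBr x u1 u2 : pairing x (u1 - u2) = pairing x u1 - pairing x u2.
Proof. by rewrite pairingDr pairingNr. Qed.
Lemma pairing0l u : pairing 0 u = 0.
Proof. by rewrite /pairing mul0mx mxE. Qed.
Lemma pairing0r x : pairing x 0 = 0.
Proof. by rewrite /pairing mulmx0 mxE. Qed.
Lemma pairing_suml (I : Type) (r : seq I) (P : pred I) (F : I -> 'rV[K]_n) u :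
  pairing (\sum_(i <- r | P i) F i) u = \sum_(i <- r | P i) pairing (F i) u.
Proof. by rewrite /pairing mulmx_suml summxE. Qed.
Lemma pairing_sumr (I : Type) (r : seq I) (P : pred I) (F : I -> 'cV[K]_n) x :
  pairing x (\sum_(i <- r | P i) F i) = \sum_(i <- r | P i) pairing x (F i).
Proof. by rewrite /pairing mulmx_sumr summxE. Qed.

Lemma pairing_tr_gt0 x : (0 < pairing x x^T) = (x != 0).
Proof.
rewrite /pairing mxE; have sq_ge0 i : 0 <= x 0 i * x^T i 0 by rewrite mxE -expr2 sqr_ge0.
apply/idP/idP.
  by apply: contraTneq => ->; rewrite big1 ?ltxx // => i _; rewrite !mxE mul0r.
move=> nz; have [i xi] : exists i, x 0 i != 0.
  apply/existsP; apply: contraR nz; rewrite negb_exists => /forallP x0.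
  by apply/eqP/rowP => i; rewrite mxE; apply/eqP; rewrite -[_ == _]negbK x0.
rewrite (bigD1 i) //= ltr_pwDl ?sumr_ge0 //.
by rewrite mxE lt0r mulf_eq0 orbb xi -expr2 sqr_ge0.
Qed.

End Pairing.

Section Cones.
Context {K : realFieldType} {n : nat}.
Implicit Types (g l : seq 'rV[K]_n) (a v w x y : 'rV[K]_n) (u : 'cV[K]_n).

(* The conic hull with coefficients indexed by nat rather than 'I_(size g);
   this form is stable under list surgery and is used throughout. *)
Definition ncone g : vset := fun x => exists c : nat -> K,
  (forall i, 0 <= c i) /\ x = \sum_(0 <= i < size g) c i *: g`_i.

Lemma cone_ncone g x : cone g x <-> ncone g x.
Proof.
split=> [[c [c0 ->]]|[c [c0 ->]]]; last by exists (fun i => c i); rewrite big_mkord.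
exists (fun k => if insub k is Some i then c i else 0); split.
  by move=> k; case: insubP.
by rewrite big_mkord; apply: eq_bigr => i _; rewrite valK.
Qed.

Lemma ncone_cons a g x : ncone (a :: g) x <->
  exists t y, [/\ 0 <= t, ncone g y & x = t *: a + y].
Proof.
split=> [[c [c0 ->]]|[t [y [t0 [c [c0 ->]] ->]]]].
  exists (c 0%N), (\sum_(0 <= i < size g) c i.+1 *: g`_i); split => //.
    by exists (fun i => c i.+1).
  by rewrite /= big_nat_recl //= big_add1.
exists (fun i => if i is i'.+1 then c i' else t); split; first by case.
by rewrite /= big_nat_recl //= big_add1.
Qed.

Lemma ncone0 g : ncone g 0.
Proof. by exists (fun=> 0); split => //; rewrite big1 // => i _; rewrite scale0r. Qed.

Lemma ncone_nil x : ncone [::] x <-> x = 0.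
Proof. by split=> [[c [_ ->]]|->]; [rewrite big_geq | apply: ncone0]. Qed.

Lemma nconeD g x y : ncone g x -> ncone g y -> ncone g (x + y).
Proof.
move=> [c [c0 ->]] [d [d0 ->]]; exists (fun i => c i + d i); split.
  by move=> i; rewrite addr_ge0.
by rewrite -big_split; apply: eq_bigr => i _; rewrite scalerDl.
Qed.

Lemma nconeZ g t x : 0 <= t -> ncone g x -> ncone g (t *: x).
Proof.
move=> t0 [c [c0 ->]]; exists (fun i => t * c i); split.
  by move=> i; rewrite mulr_ge0.
by rewrite scaler_sumr; apply: eq_bigr => i _; rewrite scalerA.
Qed.

Lemma ncone_mem g v : v \in g -> ncone g v.
Proof.
move=> vg; exists (fun i => (i == index v g)%:R); split => [i|]; first exact: ler0n.
rewrite (bigD1_seq (index v g)) ?mem_index_iota ?index_mem ?iota_uniq //=.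
rewrite eqxx scale1r nth_index // big1 ?addr0 // => i /negbTE ->.
by rewrite scale0r.
Qed.

Lemma ncone_gen g g' x : (forall v, v \in g -> ncone g' v) -> ncone g x -> ncone g' x.
Proof.
move=> sub [c [c0 ->]]; rewrite big_nat_cond.
elim/big_rec: _ => [|i y /andP[/andP[_ ilt] _] cy]; first exact: ncone0.
by apply: nconeD => //; apply: nconeZ => //; apply: sub; rewrite mem_nth.
Qed.

Lemma ncone_sub g g' x : {subset g <= g'} -> ncone g x -> ncone g' x.
Proof. by move=> sub; apply: ncone_gen => v /sub; apply: ncone_mem. Qed.

Lemma ncone_single v x : ncone [:: v] x <-> exists t, 0 <= t /\ x = t *: v.
Proof.
split=> [/ncone_cons [t [y [t0 /ncone_nil -> ->]]]|[t [t0 ->]]].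
  by exists t; rewrite addr0.
by apply/ncone_cons; exists t, 0; rewrite addr0; split => //; apply: ncone0.
Qed.

Lemma ncone_single_scale v (b : K) x : 0 < b -> ncone [:: v] x <-> ncone [:: b *: v] x.
Proof.
move=> b0; split=> /ncone_single [t [t0 ->]]; apply/ncone_single.
  exists (t / b); split; first by rewrite divr_ge0 // ltW.
  by rewrite scalerA divfK // gt_eqF.
by exists (t * b); rewrite scalerA mulr_ge0 // ltW.
Qed.

Lemma ncone_single_pos v w : w != 0 -> ncone [:: v] w -> exists2 b, 0 < b & w = b *: v.
Proof.
move=> w0 /ncone_single [b [b0 eb]]; exists b => //.
by rewrite lt0r b0 andbT; apply: contraNneq w0 => b00; rewrite eb b00 scale0r.
Qed.

Lemma ncone_pairing_ge0 g x u : (forall v, v \in g -> 0 <= pairing v u) ->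
  ncone g x -> 0 <= pairing x u.
Proof.
move=> gu [c [c0 ->]]; rewrite pairing_suml big_nat_cond.
apply: sumr_ge0 => i /andP[/andP[_ ilt] _].
by rewrite pairingZl mulr_ge0 // gu // mem_nth.
Qed.

Lemma ncone_pairing_eq0 g (c : nat -> K) u : (forall i, 0 <= c i) ->
  (forall v, v \in g -> 0 <= pairing v u) ->
  pairing (\sum_(0 <= i < size g) c i *: g`_i) u = 0 ->
  forall i, (i < size g)%N -> c i * pairing g`_i u = 0.
Proof.
move=> c0 gu; rewrite pairing_suml big_mkord => sum0 i ilt.
have terms_ge0 (j : 'I_(size g)) : true -> 0 <= pairing (c j *: g`_j) u.
  by move=> _; rewrite pairingZl mulr_ge0 // gu // mem_nth.
by have := @psumr_eq0P _ _ _ _ terms_ge0 sum0 (Ordinal ilt) isT; rewrite pairingZl.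
Qed.

Lemma ncone_pos_eq0 g y u : ncone g y -> (forall w, w \in g -> 0 < pairing w u) ->
  pairing y u <= 0 -> y = 0.
Proof.
move=> [c [c0 ->]] gu yu; have gu' v : v \in g -> 0 <= pairing v u.
  by move=> /gu /ltW.
have y0 : pairing (\sum_(0 <= i < size g) c i *: g`_i) u = 0.
  by apply/eqP; rewrite eq_le yu (ncone_pairing_ge0 gu') //; exists c.
rewrite big_nat_cond big1 // => i /andP[/andP[_ ilt] _].
have /eqP := ncone_pairing_eq0 c0 gu' y0 ilt.
by rewrite mulf_eq0 (gt_eqF (gu _ (mem_nth 0 ilt))) orbF => /eqP ->; rewrite scale0r.
Qed.

Definition proj_along a u x : 'rV[K]_n := x - (pairing x u / pairing a u) *: a.

Lemma proj_alongD a u : {morph proj_along a u : x y / x + y}.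
Proof.
by move=> x y; rewrite /proj_along pairingDl mulrDl scalerDl opprD addrACA.
Qed.

Lemma proj_alongZ a u t x : proj_along a u (t *: x) = t *: proj_along a u x.
Proof. by rewrite /proj_along pairingZl scalerBr scalerA mulrA. Qed.

Lemma ncone_map_proj a u g y : ncone (map (proj_along a u) g) y ->
  exists z, ncone g z /\ y = proj_along a u z.
Proof.
move=> [c [c0 ->]]; exists (\sum_(0 <= i < size g) c i *: g`_i); split.
  by exists c.
have p0 : proj_along a u 0 = 0 by rewrite /proj_along pairing0l mul0r scale0r subr0.
rewrite (big_morph _ (proj_alongD a u) p0).
by rewrite size_map; apply: eq_big_nat => i /andP[_ ilt]; rewrite proj_alongZ (nth_map 0).
Qed.

Lemma ncone_lift_proj a g x u : pairing a u < 0 -> pairing x u < 0 ->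
  (forall v, v \in g -> 0 <= pairing v u) ->
  ncone (map (proj_along a u) g) (proj_along a u x) -> ncone (a :: g) x.
Proof.
move=> au xu gu /ncone_map_proj [z [zg ez]]; apply/ncone_cons.
have zu : 0 <= pairing z u := ncone_pairing_ge0 gu zg.
exists ((pairing x u - pairing z u) / pairing a u), z; split => //.
  by rewrite ler_ndivlMr // mul0r subr_le0 (le_trans (ltW xu)).
have ex : x = z - (pairing z u / pairing a u) *: a + (pairing x u / pairing a u) *: a.
  by move: ez; rewrite /proj_along => <-; rewrite subrK.
by rewrite {1}ex mulrBl scalerBl addrAC [z + _]addrC [RHS]addrAC.
Qed.

Lemma farkas g x : ~ ncone g x ->
  exists u, (forall v, v \in g -> 0 <= pairing v u) /\ pairing x u < 0.
Proof.
have [k sg] : exists k, size g = k by exists (size g).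
elim: k g sg x => [|k IH] g sg x nx.
  exists (- x^T); split => [v|]; first by rewrite (size0nil sg).
  rewrite pairingNr oppr_lt0 pairing_tr_gt0.
  by apply/eqP => x0; apply: nx; rewrite x0; apply: ncone0.
case: g sg nx => // a g [sg] nx.
have [u [gu xu]] : exists u, (forall v, v \in g -> 0 <= pairing v u) /\ pairing x u < 0.
  by apply: IH => //; apply: contra_not nx; apply: ncone_sub => v vg; rewrite inE vg orbT.
have [au|au] := leP 0 (pairing a u).
  by exists u; split => // v; rewrite inE => /orP[/eqP->|/gu].
set p := proj_along a u.
have [m [gm pxm]] : exists m, (forall w, w \in map p g -> 0 <= pairing w m) /\
    pairing (p x) m < 0.
  apply: IH; rewrite ?size_map //; apply: contra_not nx; exact: ncone_lift_proj.
(* pull m back along the projection *)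
pose m' := m - (pairing a m / pairing a u) *: u.
have m'E w : pairing w m' = pairing (p w) m.
  rewrite /m' /p /proj_along pairingBr pairingBl pairingZr pairingZl.
  by rewrite [in LHS]mulrAC [in RHS]mulrAC (mulrC (pairing a m)).
exists m'; split; last by rewrite m'E.
move=> w; rewrite inE => /orP[/eqP->|wg].
  by rewrite /m' pairingBr pairingZr mulfVK ?ltr0_neq0 // subrr.
by rewrite m'E gm // map_f.
Qed.

Lemma ncone_perp g x u : (forall v, v \in g -> pairing v u = 0) -> ncone g x ->
  pairing x u = 0.
Proof.
move=> gu xg; apply/eqP; rewrite eq_le -oppr_ge0 -pairingNr.
by rewrite !(@ncone_pairing_ge0 g) // => v /gu; rewrite ?pairingNr => ->; rewrite ?oppr0.
Qed.

Lemma ncone_face_support g x m : (forall v, v \in g -> 0 <= pairing v m) ->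
  ncone g x -> pairing x m = 0 -> ncone [seq h <- g | pairing h m == 0] x.
Proof.
move=> gm [c [c0 ex]] xm; have := ncone_pairing_eq0 c0 gm; rewrite -ex => /(_ xm) terms0.
rewrite ex big_nat_cond; elim/big_rec: _ => [|i y /andP[/andP[_ ilt] _] cy].
  exact: ncone0.
apply: nconeD => //; have [gim|gim] := eqVneq (pairing g`_i m) 0.
  by apply: nconeZ => //; apply: ncone_mem; rewrite mem_filter gim eqxx mem_nth.
move/eqP: (terms0 i ilt); rewrite mulf_eq0 (negbTE gim) orbF => /eqP ->.
by rewrite scale0r; apply: ncone0.
Qed.

Lemma ncone_rem v g x : v \in g -> ncone g x ->
  exists t y, [/\ 0 <= t, ncone (rem v g) y & x = t *: v + y].
Proof.
move=> vg gx; apply/ncone_cons; apply: ncone_sub gx => w.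
by rewrite (perm_mem (perm_to_rem vg)).
Qed.

Lemma ncone_line l v x : ncone (l ++ [:: v; - v]) x ->
  exists y t, ncone l y /\ x = y + t *: v.
Proof.
move=> lx; have : ncone [:: v, - v & l] x.
  by apply: ncone_sub lx => w; rewrite mem_cat orbC !inE orbA.
move=> /ncone_cons [a [z [a0 /ncone_cons [b [y [b0 ly ->]]] ->]]].
exists y, (a - b); split => //.
by rewrite scalerN scalerBl [RHS]addrC -[RHS]addrA.
Qed.

Definition irredundant g := forall v, v \in g -> ~ ncone (rem v g) v.

Lemma ncone_rem_redundant g v x : v \in g -> ncone (rem v g) v ->
  ncone g x <-> ncone (rem v g) x.
Proof.
move=> vg vr; split; last by apply: ncone_sub => w; apply: mem_rem.
apply: ncone_gen => w wg; have [->|wv] := eqVneq w v; first exact: vr.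
by apply: ncone_mem; rewrite rem_mem.
Qed.

Lemma irredundant_generators g :
  exists g', (forall x, ncone g x <-> ncone g' x) /\ irredundant g'.
Proof.
have [k sg] : exists k, (size g <= k)%N by exists (size g).
elim: k g sg => [|k IH] g sg.
  by exists g; split => // v; move: sg; rewrite leqn0 => /nilP ->.
have [[v [vg vr]]|irr] := classic (exists v, v \in g /\ ncone (rem v g) v); last first.
  by exists g; split => // v vg vr; apply: irr; exists v.
have [|g' [eg' irr]] := IH (rem v g); first by rewrite size_rem //; case: (size g) sg.
by exists g'; split => // x; rewrite (ncone_rem_redundant x vg vr).
Qed.

Lemma irredundant_no_opposite g v w : sharp (ncone g) -> irredundant g ->
  v \in g -> w \in rem v g -> ~ ncone (rem v g ++ [:: v; - v]) (- w).
Proof.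
move=> shg irr vg wl /ncone_line [y [t [ly ewy]]].
have wg : w \in g := mem_rem wl.
have rg z : ncone (rem v g) z -> ncone g z by apply: ncone_sub => q /mem_rem.
have wy : w + y = - t *: v by rewrite -[w]opprK ewy opprD addrAC addNr add0r scaleNr.
have [tn|tp] := ltP 0 (- t).
  apply: (irr v vg); rewrite {2}(_ : v = (- t)^-1 *: (w + y)).
    by apply: nconeZ; [rewrite invr_ge0 ltW | apply: nconeD => //; apply: ncone_mem].
  by rewrite wy scalerA mulVf ?scale1r // gt_eqF.
have wy0 : w + y = 0.
  apply: shg; first by apply: rg; apply: nconeD => //; apply: ncone_mem.
  by rewrite wy scaleNr opprK; apply: nconeZ; [rewrite -oppr_le0 | apply: ncone_mem].
have w0 : w = 0.
  by apply: shg; [apply: ncone_mem | rewrite (addr0_eq wy0); exact: rg].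
by apply: (irr w wg); rewrite w0; apply: ncone0.
Qed.

(* Farkas certificates for finitely many points add up to one functional,
   nonnegative on M and strictly positive on every point of l. *)
Lemma common_positive_functional (M : seq 'rV[K]_n) l : {subset l <= M} ->
  (forall w, w \in l -> ~ ncone M (- w)) ->
  exists u, (forall x, x \in M -> 0 <= pairing x u) /\
            (forall w, w \in l -> 0 < pairing w u).
Proof.
elim: l => [|w l IH] lM sep; first by exists 0; split => // x _; rewrite pairing0r.
have [u [Mu lu]] := IH (fun q ql => lM q (predU1r q w ql))
  (fun q ql => sep q (predU1r q w ql)).
have [u' [Mu' wu']] := farkas (sep w (mem_head _ _)).
rewrite pairingNl oppr_lt0 in wu'.
exists (u + u'); split => [x xM|q]; first by rewrite pairingDr addr_ge0 ?Mu ?Mu'.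
rewrite inE pairingDr => /orP[/eqP->|ql]; first by rewrite ltr_wpDl ?Mu ?lM ?mem_head.
by rewrite ltr_pwDl ?lu ?Mu' ?lM // inE ql orbT.
Qed.

Lemma irredundant_extremal g v : sharp (ncone g) -> irredundant g -> v \in g ->
  v != 0 /\ is_face (ncone [:: v]) (ncone g).
Proof.
move=> shg irr vg; split.
  by apply/eqP => v0; apply: (irr v vg); rewrite v0; apply: ncone0.
set l := rem v g.
have lM : {subset l <= l ++ [:: v; - v]} by move=> w wl; rewrite mem_cat wl.
have [u [Mu lu]] := common_positive_functional lM
  (fun w => irredundant_no_opposite shg irr vg).
have uv : pairing v u = 0.
  have vM : [/\ v \in l ++ [:: v; - v] & - v \in l ++ [:: v; - v]].
    by rewrite !mem_cat !inE !eqxx !orbT.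
  by case: vM => vM nvM; apply/eqP; rewrite eq_le -oppr_ge0 -pairingNl !Mu.
exists u; split => [x|x].
  apply: ncone_pairing_ge0 => w wg; have [->|wv] := eqVneq w v; first by rewrite uv.
  by apply: Mu; rewrite mem_cat rem_mem.
split=> [/ncone_single [t [t0 ->]]|[/(ncone_rem vg) [t [y [t0 ly ->]]]]].
  by rewrite pairingZl uv mulr0; split => //; apply: nconeZ => //; apply: ncone_mem.
rewrite pairingDl pairingZl uv mulr0 add0r => yu.
by rewrite (ncone_pos_eq0 ly lu) ?yu // addr0; apply/ncone_single; exists t.
Qed.

Lemma is_face_eq (T T' C C' : @vset K n) : set_eq T T' -> set_eq C C' ->
  is_face T C -> is_face T' C'.
Proof.
move=> eT eC [u [u0 Tu]]; exists u; split=> [x /eC|x]; first exact: u0.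
by rewrite -eT Tu eC.
Qed.

Lemma face_sub (T C : @vset K n) : is_face T C -> forall x, T x -> C x.
Proof. by move=> [u [_ Tu]] x /Tu []. Qed.

Lemma sharp_rays g : sharp (ncone g) -> exists g',
  (forall x, ncone g x <-> ncone g' x) /\
  forall v, v \in g' -> v != 0 /\ is_face (ncone [:: v]) (ncone g).
Proof.
move=> shg; have [g' [eg' irr]] := irredundant_generators g.
have shg' : sharp (ncone g') by move=> x /eg' gx /eg' gnx; apply: shg.
exists g'; split => // v vg'; have [v0 fv] := irredundant_extremal shg' irr vg'.
by split => //; apply: is_face_eq fv => // x; rewrite eg'.
Qed.

Lemma dominating_multiple g u m : exists lam : K, forall h, h \in g ->
  0 < pairing h u -> 0 < pairing h m + lam * pairing h u.
Proof.
exists (1 + \sum_(h <- g) `|pairing h m| / `|pairing h u|) => h hg hu.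
have bound : `|pairing h m| <= (\sum_(h <- g) `|pairing h m| / `|pairing h u|) * pairing h u.
  rewrite (big_rem h) //= mulrDl [`|pairing h u|]gtr0_norm // divfK ?gt_eqF // lerDl.
  by rewrite mulr_ge0 ?sumr_ge0 ?ltW // => k _; rewrite divr_ge0.
rewrite mulrDl mul1r addrCA ltr_pwDl //.
by rewrite -lerBlDr sub0r lerNl (le_trans _ bound) // -normrN ler_norm.
Qed.

Lemma face_trans g (F G : @vset K n) : is_face F (ncone g) -> is_face G F ->
  is_face G (ncone g).
Proof.
move=> [u [u0 eF]] [m [m0 eG]].
have ug h : h \in g -> 0 <= pairing h u by move=> hg; apply/u0/ncone_mem.
have [lam dom] := dominating_multiple g u m.
set w := m + lam *: u.
have wE x : pairing x w = pairing x m + lam * pairing x u by rewrite pairingDr pairingZr.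
have wg h : h \in g -> 0 <= pairing h w.
  move=> hg; have := ug h hg; rewrite le0r => /orP[/eqP hu|hp]; last first.
    by rewrite wE ltW ?dom.
  by rewrite wE hu mulr0 addr0; apply/m0/eF; split => //; apply: ncone_mem.
exists w; split => [x|x]; first exact: ncone_pairing_ge0.
split=> [/eG [/eF [gx ux] mx]|[gx wx]]; first by rewrite wE ux mx mulr0 addr0.
have ux : pairing x u = 0.
  apply: ncone_perp (ncone_face_support wg gx wx) => h; rewrite mem_filter.
  move=> /andP[/eqP hw hg]; apply/eqP; rewrite eq_le ug // andbT.
  by rewrite leNgt; apply/negP => hp; move/eqP: hw; rewrite wE gt_eqF ?dom.
by apply/eG; split; [apply/eF | move: wx; rewrite wE ux mulr0 addr0].
Qed.

End Cones.

Definition principal_ideals {K : realFieldType} (Rp : K -> Prop) : Prop :=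
  forall I, is_ideal Rp I -> exists g, Rp g /\ forall x, I x <-> exists r, Rp r /\ x = r * g.

Section Modules.
Context {K : realFieldType} {n : nat} (Rp : K -> Prop).
Hypothesis Rsub : is_subring Rp.

Lemma Rp0 : Rp 0. Proof. by case: Rsub. Qed.
Lemma Rp1 : Rp 1. Proof. by case: Rsub. Qed.
Lemma RpB x y : Rp x -> Rp y -> Rp (x - y). Proof. by case: Rsub => _ _ + _; apply. Qed.
Lemma RpM x y : Rp x -> Rp y -> Rp (x * y). Proof. by case: Rsub => _ _ _; apply. Qed.
Lemma RpN x : Rp x -> Rp (- x). Proof. by rewrite -sub0r; apply/RpB/Rp0. Qed.
Lemma RpD x y : Rp x -> Rp y -> Rp (x + y).
Proof. by move=> Rx Ry; rewrite -[y]opprK; apply/RpB/RpN. Qed.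
Lemma Rp_sum (I : Type) (r : seq I) (P : pred I) (F : I -> K) :
  (forall i, P i -> Rp (F i)) -> Rp (\sum_(i <- r | P i) F i).
Proof. by move=> RF; elim/big_rec: _ => [|i x Pi Rx]; [exact: Rp0 | apply/RpD/Rx/RF]. Qed.
Lemma Rp_nat (k : nat) : Rp k%:R.
Proof. by elim: k => [|k IH]; [exact: Rp0 | rewrite -addn1 natrD; apply/RpD/Rp1]. Qed.
Lemma Rp_int (z : int) : Rp z%:~R.
Proof. by case: z => k; [rewrite -pmulrn | rewrite NegzE mulrNz; apply: RpN]; apply: Rp_nat. Qed.

Definition submodule (P : 'rV[K]_n -> Prop) :=
  [/\ P 0, (forall x y, P x -> P y -> P (x + y)) & (forall r x, Rp r -> P x -> P (r *: x))].

Definition nbasis (P : 'rV[K]_n -> Prop) (f : seq 'rV[K]_n) :=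
  [/\ (forall v, v \in f -> P v),
      (forall x, P x -> exists c : nat -> K, (forall i, Rp (c i)) /\
          x = \sum_(0 <= i < size f) c i *: f`_i)
    & (forall c : nat -> K, (forall i, Rp (c i)) ->
          \sum_(0 <= i < size f) c i *: f`_i = 0 -> forall i, (i < size f)%N -> c i = 0)].

Lemma sum_cat (a b : seq 'rV[K]_n) (c : nat -> K) :
  \sum_(0 <= i < size (a ++ b)) c i *: (a ++ b)`_i =
  \sum_(0 <= i < size a) c i *: a`_i + \sum_(0 <= i < size b) c (size a + i) *: b`_i.
Proof.
rewrite size_cat (@big_cat_nat _ _ _ (size a)) /= ?leq_addr //; congr (_ + _).
  by apply: eq_big_nat => i /andP[_ ilt]; rewrite nth_cat ilt.
rewrite -{1}(add0n (size a)) big_addn addKn; apply: eq_big_nat => i _.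
by rewrite nth_cat ltnNge leq_addl /= addnK addnC.
Qed.

Lemma nbasis_extend (P : 'rV[K]_n -> Prop) (j : 'I_n) (x0 : 'rV[K]_n) g f :
  submodule P -> g != 0 -> P x0 -> x0 0 j = g ->
  (forall x, P x -> exists r, Rp r /\ x 0 j = r * g) ->
  nbasis (fun x => P x /\ x 0 j = 0) f -> nbasis P (x0 :: f).
Proof.
move=> [P0 PD PZ] g0 Px0 x0j Pj [fP fspan find]; split.
- by move=> v; rewrite inE => /orP[/eqP->|/fP[]].
- move=> x Px; have [r [Rr xr]] := Pj x Px.
  have [|c [Rc ex]] := fspan (x - r *: x0).
    split; first by apply: PD => //; rewrite -scaleNr; apply: PZ => //; apply: RpN.
    by rewrite !mxE x0j xr subrr.
  exists (fun i => if i is i'.+1 then c i' else r); split; first by case.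
  by rewrite /= big_nat_recl //= -ex addrC subrK.
- move=> c Rc; rewrite /= big_nat_recl //= => sum0.
  have fj0 i : (i < size f)%N -> f`_i 0 j = 0 by move=> ilt; case: (fP _ (mem_nth 0 ilt)).
  have c0g : c 0%N * g = 0.
    move/(congr1 (fun x : 'rV[K]_n => x 0 j)): sum0.
    rewrite !mxE x0j summxE big_nat_cond big1 ?addr0 // => i /andP[/andP[_ ilt] _].
    by rewrite mxE fj0 // mulr0.
  have c0 : c 0%N = 0 by move/eqP: c0g; rewrite mulf_eq0 (negbTE g0) orbF => /eqP.
  move: sum0; rewrite c0 scale0r add0r => sum0.
  by case => // i; rewrite ltnS; apply: (find (fun i => c i.+1)).
Qed.

Hypothesis Rpid : principal_ideals Rp.

(* Over a principal ideal ring, every submodule of R^n is free: induction on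
   the number of coordinates that may be nonzero. *)
Lemma submodule_nbasis (k : nat) (P : 'rV[K]_n -> Prop) : submodule P ->
  (forall x, P x -> (forall i, Rp (x 0 i)) /\ forall i : 'I_n, (k <= i)%N -> x 0 i = 0) ->
  exists f, nbasis P f.
Proof.
elim: k P => [|k IH] P subP Pcoord.
  exists [::]; split => // x Px.
  exists (fun=> 0); split => [_|]; first exact: Rp0.
  by rewrite big_geq //; apply/rowP => i; rewrite mxE (proj2 (Pcoord x Px)).
have [nk|kn] := leqP n k.
  apply: IH => // x /Pcoord [Rx xk]; split => // i ki.
  by have := leq_trans (ltn_ord i) (leq_trans nk ki); rewrite ltnn.
set j : 'I_n := Ordinal kn; have [P0 PD PZ] := subP.
pose P' := fun x => P x /\ x 0 j = 0.
have [f fP'] : exists f, nbasis P' f.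
  apply: IH.
  - split; [by split; rewrite ?mxE |
      by move=> x y [Px xj] [Py yj]; split; [apply: PD | rewrite mxE xj yj addr0] |
      by move=> r x Rr [Px xj]; split; [apply: PZ | rewrite mxE xj mulr0]].
  - move=> x [/Pcoord [Rx xk] xj]; split => // i ki.
    have [eik|nik] := eqVneq (nat_of_ord i) k; last by apply: xk; rewrite ltn_neqAle eq_sym nik.
    by rewrite (_ : i = j) //; apply: val_inj.
pose I := fun a => exists x, P x /\ x 0 j = a.
have [g [Rg Ig]] : exists g, Rp g /\ forall x, I x <-> exists r, Rp r /\ x = r * g.
  apply: Rpid; split; [by move=> a [x [/Pcoord [Rx _] <-]] | by exists 0; rewrite mxE |
    by move=> a b [x [Px <-]] [y [Py <-]]; exists (x + y); split; [apply: PD | rewrite mxE] |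
    by move=> r a Rr [x [Px <-]]; exists (r *: x); split; [apply: PZ | rewrite mxE]].
have Pj x : P x -> exists r, Rp r /\ x 0 j = r * g by move=> Px; apply/Ig; exists x.
have [g0|gn0] := eqVneq g 0.
  exists f; case: fP' => fP fspan find; split => // [v /fP[]//|x Px].
  by apply: fspan; split => //; have [r [_ ->]] := Pj x Px; rewrite g0 mulr0.
have [x0 [Px0 x0j]] : I g by apply/Ig; exists 1; rewrite mul1r; split => //; apply: Rp1.
by exists (x0 :: f); apply: (nbasis_extend subP gn0 Px0 x0j Pj fP').
Qed.

Lemma dual_family_coef (v : seq 'rV[K]_n) (m : seq 'cV[K]_n) (c : nat -> K) k :
  (forall i j, (i < size v)%N -> (j < size v)%N -> pairing v`_i m`_j = (i == j)%:R) ->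
  (k < size v)%N -> pairing (\sum_(0 <= i < size v) c i *: v`_i) m`_k = c k.
Proof.
move=> dual kv; rewrite pairing_suml (bigD1_seq k) ?mem_index_iota ?iota_uniq //=.
rewrite pairingZl dual // eqxx mulr1 big_seq_cond big1 ?addr0 // => i.
by rewrite mem_index_iota => /andP[/andP[_ iv] ik]; rewrite pairingZl dual // (negbTE ik) mulr0.
Qed.

Lemma nbasis_dual_split (P : 'rV[K]_n -> Prop) (v : seq 'rV[K]_n) (m : seq 'cV[K]_n) f :
  submodule P ->
  (forall i j, (i < size v)%N -> (j < size v)%N -> pairing v`_i m`_j = (i == j)%:R) ->
  (forall x, x \in v -> P x) -> (forall x j, P x -> Rp (pairing x m`_j)) ->
  nbasis (fun x => P x /\ forall j, (j < size v)%N -> pairing x m`_j = 0) f ->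
  nbasis P (v ++ f).
Proof.
move=> [P0 PD PZ] dual vP mP [fP fspan find].
have P_sum (c : nat -> K) : (forall i, Rp (c i)) -> P (\sum_(0 <= i < size v) c i *: v`_i).
  move=> Rc; rewrite big_nat_cond; elim/big_rec: _ => // i y /andP[/andP[_ iv] _] Py.
  by apply: PD => //; apply: PZ => //; apply/vP/mem_nth.
have fsumk (c : nat -> K) k : (k < size v)%N ->
    pairing (\sum_(0 <= i < size f) c i *: f`_i) m`_k = 0.
  move=> kv; rewrite pairing_suml big_nat_cond big1 // => i /andP[/andP[_ il] _].
  by rewrite pairingZl (proj2 (fP _ (mem_nth 0 il))) // mulr0.
split.
- by move=> x; rewrite mem_cat => /orP[/vP|/fP[]].
- move=> x Px; set xv := \sum_(0 <= i < size v) pairing x m`_i *: v`_i.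
  have [|d [Rd ed]] := fspan (x - xv).
    split => [|k kv]; last by rewrite pairingBl dual_family_coef // subrr.
    apply: PD => //; rewrite -scaleN1r; apply: PZ; first exact/RpN/Rp1.
    by apply: P_sum => i; apply: mP.
  exists (fun i => if (i < size v)%N then pairing x m`_i else d (i - size v)%N).
  split => [i|]; first by case: ifP => _; [apply: mP | apply: Rd].
  transitivity (xv + (x - xv)); first by rewrite addrC subrK.
  rewrite sum_cat ed; congr (_ + _).
    by apply: eq_big_nat => i /andP[_ ->].
  by apply: eq_big_nat => i _; rewrite ltnNge leq_addr /= addKn.
- move=> c Rc; rewrite sum_cat => sum0.
  have cv k : (k < size v)%N -> c k = 0.
    move=> kv; move/(congr1 (pairing^~ m`_k)): sum0.
    by rewrite pairingDl dual_family_coef // fsumk ?addr0 ?pairing0l.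
  move: sum0; rewrite big_nat_cond big1 ?add0r => [sumf i ilt|i /andP[/andP[_ iv] _]];
    last by rewrite cv // scale0r.
  have [iv|vi] := ltnP i (size v); first exact: cv.
  rewrite -(subnKC vi); apply: (find (fun k => c (size v + k))) => //.
  by rewrite size_cat in ilt; lia.
Qed.

End Modules.

Section Lattice.
Context {K : realFieldType} {n : nat} (Rp : K -> Prop) (B : 'M[K]_n).
Hypothesis Rsub : is_subring Rp.
Hypothesis Bu : B \in unitmx.

Lemma inW_coord w : inW Rp B w <-> forall i, Rp ((w *m invmx B) 0 i).
Proof.
split=> [[x [Rx ->]]|Rw]; first by rewrite mulmxK.
by exists (w *m invmx B); rewrite mulmxKV.
Qed.

Lemma inW_submodule : submodule Rp (inW Rp B).
Proof.
split=> [|x y /inW_coord Rx /inW_coord Ry|r x Rr /inW_coord Rx]; apply/inW_coord => i.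
- by rewrite mul0mx mxE; apply: Rp0.
- by rewrite mulmxDl mxE; apply: RpD.
- by rewrite -scalemxAl mxE; apply: RpM.
Qed.

Lemma inN_inW v : inN B v -> inW Rp B v.
Proof.
move=> [z ->]; exists (map_mx (fun a : int => a%:~R) z).
by split => // i; rewrite mxE; apply: Rp_int.
Qed.

Lemma inWdualD u1 u2 : inWdual Rp B u1 -> inWdual Rp B u2 -> inWdual Rp B (u1 + u2).
Proof. by move=> W1 W2 w Ww; rewrite pairingDr; apply: RpD => //; [apply: W1 | apply: W2]. Qed.
Lemma inWdualZ r u : Rp r -> inWdual Rp B u -> inWdual Rp B (r *: u).
Proof. by move=> Rr Wu w Ww; rewrite pairingZr; apply: RpM => //; apply: Wu. Qed.
Lemma inWdualB u1 u2 : inWdual Rp B u1 -> inWdual Rp B u2 -> inWdual Rp B (u1 - u2).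
Proof. by move=> W1 W2 w Ww; rewrite pairingBr; apply: RpB => //; [apply: W1 | apply: W2]. Qed.
Lemma inWdual_sum (I : Type) (r : seq I) (P : pred I) (F : I -> 'cV[K]_n) :
  (forall i, P i -> inWdual Rp B (F i)) -> inWdual Rp B (\sum_(i <- r | P i) F i).
Proof.
move=> WF; elim/big_rec: _ => [w _|i x Pi Wx]; last by apply/inWdualD/Wx/WF.
by rewrite pairing0r; apply: Rp0.
Qed.

Hypothesis Rpid : principal_ideals Rp.

Lemma W_submodule_nbasis (P : 'rV[K]_n -> Prop) : submodule Rp P ->
  (forall x, P x -> inW Rp B x) -> exists f, nbasis Rp P f.
Proof.
move=> [P0 PD PZ] PW; pose Q x := P (x *m B).
have [f [fQ fspan find]] : exists f, nbasis Rp Q f.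
  apply: (submodule_nbasis Rsub Rpid (k := n)).
  - split; [by rewrite /Q mul0mx | by move=> x y; rewrite /Q mulmxDl; apply: PD |
      by move=> r x Rr; rewrite /Q -scalemxAl; apply: PZ].
  - move=> x Qx; split => [i|i ni]; last by have := ltn_ord i; rewrite ltnNge ni.
    by have /inW_coord := PW _ Qx; rewrite mulmxK.
have mapE (c : nat -> K) : \sum_(0 <= i < size f) c i *: (map (mulmxr B) f)`_i =
    (\sum_(0 <= i < size f) c i *: f`_i) *m B.
  by rewrite mulmx_suml; apply: eq_big_nat => i /andP[_ il]; rewrite (nth_map 0) // scalemxAl.
exists (map (mulmxr B) f); split; rewrite ?size_map.
- by move=> v /mapP [x /fQ Qx ->].
- move=> x Px; have [|c [Rc ex]] := fspan (x *m invmx B); first by rewrite /Q mulmxKV.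
  by exists c; split => //; rewrite mapE -ex mulmxKV.
- move=> c Rc; rewrite mapE => /(congr1 (mulmxr (invmx B))); rewrite /= mulmxK // mul0mx.
  exact: find.
Qed.

Lemma nbasis_R_basis e : nbasis Rp (inW Rp B) e -> is_R_basis Rp B e.
Proof.
move=> [eW espan eind]; split => // [w /espan [c [Rc ->]]|r Rr sum0 i].
  by exists (fun i => c i); rewrite big_mkord.
pose c k := if insub k is Some i then r i else 0.
have -> : r i = c i by rewrite /c valK.
apply: eind (ltn_ord i) => [k|]; first by rewrite /c; case: insubP => [j _ _|_]; [ | apply: Rp0].
by rewrite big_mkord -[RHS]sum0; apply: eq_bigr => j _; rewrite /c valK.
Qed.

Lemma R_basis_dual (e : seq 'rV[K]_n) (j : 'I_(size e)) : is_R_basis Rp B e ->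
  exists u, inWdual Rp B u /\ forall k : 'I_(size e), pairing e`_k u = (k == j)%:R.
Proof.
move=> [eW espan eind].
have [C HC] : exists C : 'I_n -> 'I_(size e) -> K, forall i,
    (forall k, Rp (C i k)) /\ row i B = \sum_(k < size e) C i k *: e`_k.
  apply: (choice (fun i (c : 'I_(size e) -> K) =>
    (forall k, Rp (c k)) /\ row i B = \sum_(k < size e) c k *: e`_k)) => i.
  apply: espan; exists (delta_mx 0 i); split; last by rewrite rowE.
  by move=> k; rewrite mxE; case: (_ && _); [apply: Rp1 | apply: Rp0].
have expand x : x *m B = \sum_(l < size e) (\sum_i x 0 i * C i l) *: e`_l.
  rewrite mulmx_sum_row; under eq_bigr => i _ do rewrite (proj2 (HC i)) scaler_sumr.
  rewrite exchange_big; apply: eq_bigr => l _; rewrite scaler_suml.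
  by apply: eq_bigr => i _; rewrite scalerA.
pose u := invmx B *m \col_i C i j.
have uE x : pairing (x *m B) u = \sum_i x 0 i * C i j.
  by rewrite /pairing mulmxA mulmxK // mxE; apply: eq_bigr => i _; rewrite mxE.
exists u; split=> [w [x [Rx ->]]|k].
  by rewrite uE; apply: Rp_sum => // i _; apply: RpM => //; apply: (proj1 (HC i)).
have [x [Rx ex]] := eW _ (mem_nth 0 (ltn_ord k)).
pose d l := \sum_i x 0 i * C i l - (l == k)%:R.
have dR l : Rp (d l).
  apply: RpB (Rp_nat _ _) => //; apply: Rp_sum => // i _.
  by apply: RpM => //; apply: (proj1 (HC i)).
have dsum : \sum_(l < size e) d l *: e`_l = 0.
  under eq_bigr => l _ do rewrite scalerBl.
  rewrite sumrB -expand -ex (bigD1 k) //= eqxx scale1r big1 ?addr0 ?subrr //.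
  by move=> l /negbTE ->; rewrite scale0r.
have /eqP := eind d dR dsum j.
by rewrite ex uE subr_eq0 eq_sym (eq_sym j) => /eqP.
Qed.

Lemma R_basis_nz (e : seq 'rV[K]_n) v : is_R_basis Rp B e -> v \in e -> v != 0.
Proof.
move=> [_ _ eind] ve; apply/eqP => v0; have il : (index v e < size e)%N by rewrite index_mem.
have esum : \sum_(k < size e) (k == Ordinal il)%:R *: e`_k = 0.
  have ev : e`_(Ordinal il) = v := nth_index 0 ve.
  rewrite (bigD1 (Ordinal il)) //= eqxx scale1r ev big1 ?addr0 // => k /negbTE ->.
  by rewrite scale0r.
have := eind _ (fun k => Rp_nat Rsub _) esum (Ordinal il).
by rewrite eqxx => /eqP; rewrite oner_eq0.
Qed.

End Lattice.

Lemma big_gcdz_bezout (I : eqType) (F : I -> int) (r : seq I) : uniq r ->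
  exists a : I -> int, \sum_(i <- r) a i * F i = \big[gcdz/0]_(i <- r) F i.
Proof.
elim: r => [|k r IH]; first by exists (fun=> 0); rewrite !big_nil.
move=> /= /andP[kr ur]; have [a Ha] := IH ur.
have [u [v Huv]] := Bezoutz (F k) (\big[gcdz/0]_(i <- r) F i).
exists (fun i => if i == k then u else v * a i).
rewrite !big_cons eqxx -Huv -Ha mulr_sumr; congr (_ + _).
rewrite big_seq_cond [RHS]big_seq_cond; apply: eq_bigr => i /andP[ir _].
by rewrite ifN ?mulrA //; apply: contraNneq kr => <-.
Qed.

Lemma big_gcdz_dvd (I : eqType) (F : I -> int) (r : seq I) i : i \in r ->
  (\big[gcdz/0]_(j <- r) F j %| F i)%Z.
Proof.
elim: r => // k r IH; rewrite inE big_cons => /orP[/eqP->|ir]; first exact: dvdz_gcdl.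
exact: dvdz_trans (dvdz_gcdr _ _) (IH ir).
Qed.

Lemma big_gcdz_nat (I : Type) (F : I -> int) (r : seq I) :
  exists g : nat, \big[gcdz/0]_(j <- r) F j = g%:Z.
Proof. by elim/big_rec: _ => [|i x _ _]; [exists 0%N | eexists]. Qed.

Section Primitive.
Context {K : realFieldType} {n : nat} (Rp : K -> Prop) (B : 'M[K]_n).
Hypothesis Rsub : is_subring Rp.
Hypothesis Bu : B \in unitmx.

Local Notation intv z := (map_mx (fun a : int => a%:~R) z).

Lemma primitive_unimodular (g0 : 'rV[K]_n) (z : 'rV[int]_n) : g0 = intv z *m B ->
  g0 != 0 -> (forall w, inN B w -> ncone [:: g0] w -> exists k : nat, w = k%:R *: g0) ->
  exists a : 'I_n -> int, \sum_i a i * z 0 i = 1.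
Proof.
move=> ez g0n0 prim; pose zi i := z 0 i.
pose G := \big[gcdz/0]_(i <- index_enum 'I_n) zi i.
have [a Ha] := big_gcdz_bezout zi (index_enum_uniq 'I_n).
exists a; rewrite Ha -/G.
have dG i : (G %| zi i)%Z by apply: big_gcdz_dvd; rewrite mem_index_enum.
have [g eg] := big_gcdz_nat zi (index_enum 'I_n); rewrite -/G in eg.
have gpos : (0 < g)%N.
  rewrite lt0n; apply: contraNneq g0n0 => gz; rewrite ez (_ : z = 0).
    by rewrite (_ : intv 0 = 0) ?mul0mx //; apply/rowP => i; rewrite !mxE.
  by apply/rowP => i; have := dG i; rewrite eg gz dvd0z mxE => /eqP.
(* w = g0 / g is again a lattice vector on the ray of g0 *)
pose w := intv (\row_i (zi i %/ G)%Z) *m B.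
have g0w : g0 = g%:R *: w.
  rewrite ez /w scalemxAl; congr (_ *m B); apply/rowP => i.
  rewrite !mxE -[z 0 i]/(zi i) -{1}(divzK (dG i)) eg intrM mulrC.
  by congr (_ * _); rewrite -[RHS]pmulrn.
have w0 : w != 0 by apply: contraNneq g0n0 => w0; rewrite g0w w0 scaler0.
have w_ray : ncone [:: g0] w.
  apply/ncone_single; exists (g%:R)^-1; rewrite invr_ge0 ler0n g0w scalerA.
  by rewrite mulVf ?scale1r // pnatr_eq0 -lt0n.
have [k ek] := prim w (ex_intro _ _ erefl) w_ray.
move: ek; rewrite g0w scalerA -{1}[w]scale1r => /eqP.
rewrite -subr_eq0 -scalerBl scaler_eq0 (negbTE w0) orbF subr_eq0 -natrM eq_sym pnatr_eq1.
by rewrite muln_eq1 => /andP[_ /eqP g1]; rewrite eg g1.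
Qed.

Lemma primitive_multiple_R (g0 w : 'rV[K]_n) mu : inN B g0 -> g0 != 0 ->
  (forall w, inN B w -> ncone [:: g0] w -> exists k : nat, w = k%:R *: g0) ->
  inW Rp B w -> w = mu *: g0 -> Rp mu.
Proof.
move=> [z ez] g0n0 prim [x [Rx ex]] wg.
have [a Ha] := primitive_unimodular ez g0n0 prim.
have xz : x = mu *: intv z by apply: (can_inj (mulmxK Bu)); rewrite -ex wg ez scalemxAl.
have -> : mu = \sum_i (a i)%:~R * x 0 i.
  transitivity (mu * (\sum_i a i * z 0 i)%:~R); first by rewrite Ha rmorph1 mulr1.
  rewrite rmorph_sum mulr_sumr; apply: eq_bigr => i _.
  by rewrite xz !mxE rmorphM mulrCA.
by apply: Rp_sum => // i _; apply: RpM => //; apply: Rp_int.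
Qed.

End Primitive.

Definition classic_bool (P : Prop) : bool :=
  if excluded_middle_informative P then true else false.

Lemma classic_boolP (P : Prop) : reflect P (classic_bool P).
Proof. by rewrite /classic_bool; case: excluded_middle_informative => h; constructor. Qed.

Section Fan.
Context {K : realFieldType} {n : nat} (B : 'M[K]_n) (S : seq (seq 'rV[K]_n))
  (gen : 'I_(size S) -> 'rV[K]_n).
Hypothesis fan : is_Nfan B S.
Hypothesis pg : prim_gens B S gen.

Lemma cone_ofE i x : cone_of S i x <-> ncone (nth [::] S i) x.
Proof. exact: cone_ncone. Qed.

Lemma fan_sharp (i : 'I_(size S)) : sharp (ncone (nth [::] S i)).
Proof.
by case: fan => _ shS _ _ _ x xi nxi; apply: (shS i x); apply/cone_ofE.
Qed.

Lemma fan_face i (T : @vset K n) : is_face T (cone_of S i) ->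
  exists j, set_eq (cone_of S j) T.
Proof. by case: fan => _ _ + _ _; apply. Qed.

Lemma fan_meet_face i j :
  is_face (Defs.setI (cone_of S i) (cone_of S j)) (cone_of S i) /\
  is_face (Defs.setI (cone_of S i) (cone_of S j)) (cone_of S j).
Proof. by case: fan => _ _ _ + _; apply. Qed.

Lemma fan_inj i j : set_eq (cone_of S i) (cone_of S j) -> i = j.
Proof. by case: fan => _ _ _ _; apply. Qed.

Lemma face_trans_of i (F G : @vset K n) : is_face F (cone_of S i) -> is_face G F ->
  is_face G (cone_of S i).
Proof.
have ei : set_eq (cone_of S i) (ncone (nth [::] S i)) by move=> x; apply: cone_ofE.
have ei' : set_eq (ncone (nth [::] S i)) (cone_of S i) by move=> x; rewrite cone_ofE.
by move=> /(is_face_eq _ ei) - /(_ F) fF /(face_trans (fF _)) /(is_face_eq _ ei'); apply.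
Qed.

Lemma ray_gen r : is_ray S r ->
  [/\ forall x, cone_of S r x <-> ncone [:: gen r] x, gen r != 0, inN B (gen r) &
      forall w, inN B w -> ncone [:: gen r] w -> exists k : nat, w = k%:R *: gen r].
Proof.
move=> rr; have [gN gr g0 gprim] := pg rr; have [v [v0 ev]] := rr.
have rv x : cone_of S r x <-> ncone [:: v] x by rewrite ev cone_ncone.
have [a a0 ea] := ncone_single_pos g0 (proj1 (rv _) gr).
have rg x : cone_of S r x <-> ncone [:: gen r] x by rewrite rv ea -ncone_single_scale.
by split => // w wN /rg; apply: gprim.
Qed.

Lemma gen_in r : is_ray S r -> cone_of S r (gen r).
Proof. by case/pg. Qed.

Lemma rays_eq r r' : is_ray S r -> is_ray S r' ->
  (forall x, cone_of S r' x -> cone_of S r x) -> r' = r.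
Proof.
move=> rr rr' sub; have [e1 _ _ _] := ray_gen rr; have [e1' g0' _ _] := ray_gen rr'.
have [a a0 ea] := ncone_single_pos g0' (proj1 (e1 _) (sub _ (gen_in rr'))).
by apply: fan_inj => x; rewrite e1 e1' ea -ncone_single_scale.
Qed.

Lemma rays_eq_gen r r' c : is_ray S r -> is_ray S r' -> 0 < c ->
  gen r' = c *: gen r -> r' = r.
Proof.
move=> rr rr' c0 ec; apply: rays_eq => // x.
have [e1 _ _ _] := ray_gen rr; have [e1' _ _ _] := ray_gen rr'.
by rewrite e1 e1' ec -ncone_single_scale.
Qed.

Lemma extremal_ray_gen i v : v != 0 -> is_face (ncone [:: v]) (cone_of S i) ->
  exists r, ray_of S r (cone_of S i) /\ exists2 c, 0 <= c & v = c *: gen r.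
Proof.
move=> v0 fv; have [r er] := fan_face fv.
have rr : is_ray S r by exists v; split => // x; rewrite er cone_ncone.
have rv : set_eq (ncone [:: v]) (cone_of S r) by move=> x; rewrite er.
exists r; split; first by split => //; apply: is_face_eq fv.
have [e1 _ _ _] := ray_gen rr.
have /e1 /ncone_single [c [c0 ->]] : cone_of S r v.
  by apply/er/ncone_single; exists 1; rewrite scale1r.
by exists c.
Qed.

Definition rays_in i : seq 'I_(size S) :=
  [seq r <- enum 'I_(size S) | classic_bool (ray_of S r (cone_of S i))].

Lemma mem_rays_in i r : r \in rays_in i <-> ray_of S r (cone_of S i).
Proof. by rewrite mem_filter mem_enum andbT; split => /classic_boolP. Qed.

Lemma rays_in_uniq i : uniq (rays_in i).
Proof. by rewrite filter_uniq // enum_uniq. Qed.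

Lemma cone_rays i x : cone_of S i x <-> ncone (map gen (rays_in i)) x.
Proof.
split=> [/cone_ofE|xr].
  have [g' [eg' fg']] := sharp_rays (@fan_sharp i).
  move=> /eg'; apply: ncone_gen => v /fg' [v0 fv].
  have [|r [ri [c c0 ->]]] := @extremal_ray_gen i v v0.
    by apply: is_face_eq fv => // y; rewrite cone_ofE.
  by apply/nconeZ/ncone_mem/map_f/mem_rays_in.
apply/cone_ofE; apply: ncone_gen xr => v /mapP [r /mem_rays_in [rr fr] ->].
by apply/cone_ofE/(face_sub fr)/gen_in.
Qed.

Lemma zero_face i r : ray_of S r (cone_of S i) ->
  is_face (fun x : 'rV[K]_n => x = 0) (cone_of S i).
Proof.
move=> [rr _]; have [e1 g0 _ _] := ray_gen rr.
have gg : 0 < pairing (gen r) (gen r)^T by rewrite pairing_tr_gt0.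
have fZ : is_face (fun x : 'rV[K]_n => x = 0) (cone_of S r).
  exists (gen r)^T; split => [x /e1 /ncone_single [t [t0 ->]]|x].
    by rewrite pairingZl mulr_ge0 // ltW.
  split=> [->|[/e1 /ncone_single [t [t0 ->]]]].
    by rewrite pairing0l e1; split => //; apply: ncone0.
  by rewrite pairingZl => /eqP; rewrite mulf_eq0 (gt_eqF gg) orbF => /eqP ->; rewrite scale0r.
have [j ej] := fan_face fZ.
apply: is_face_eq (fan_meet_face i j).1 => // x.
split=> [[_ /ej]|->] //; split; last exact/ej.
by apply/cone_ofE/ncone0.
Qed.

End Fan.

Section Equivalences.
Context {K : realFieldType} {n : nat} (Rp : K -> Prop) (B : 'M[K]_n)
  (S : seq (seq 'rV[K]_n)) (gen : 'I_(size S) -> 'rV[K]_n) (s : 'I_(size S)).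
Hypothesis Rsub : is_subring Rp.
Hypothesis Bu : B \in unitmx.
Hypothesis fan : is_Nfan B S.
Hypothesis pg : prim_gens B S gen.

Local Notation sigma := (cone_of S s).

Definition ray_dual (r : 'I_(size S)) (m : 'cV[K]_n) : Prop :=
  inWdual Rp B m /\ forall r', ray_of S r' sigma -> rhoN S gen r' m = (r' == r)%:R.

Definition ray_duals (m : 'I_(size S) -> 'cV[K]_n) : Prop :=
  forall r, ray_of S r sigma -> ray_dual r (m r).

Lemma ray_duals_choice :
  (forall r, ray_of S r sigma -> exists m, ray_dual r m) -> exists m, ray_duals m.
Proof.
move=> dual; apply: (choice (fun r m => ray_of S r sigma -> ray_dual r m)) => r.
by have [/dual [m mr]|nr] := classic (ray_of S r sigma); [exists m | exists 0].
Qed.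

Lemma ray_duals_coef m (a : 'I_(size S) -> K) r' : ray_duals m -> ray_of S r' sigma ->
  rhoN S gen r' (\sum_(r <- rays_in s) a r *: m r) = a r'.
Proof.
move=> dual r's; rewrite /rhoN pairing_sumr.
rewrite (bigD1_seq r') ?rays_in_uniq ?(proj2 (mem_rays_in _ _)) //=.
rewrite pairingZr [pairing _ _](dual _ r's).2 // eqxx mulr1 big_seq_cond big1 ?addr0 //.
move=> r /andP[/mem_rays_in rs rr']; rewrite pairingZr [pairing _ _](dual _ rs).2 //.
by rewrite eq_sym (negbTE rr') mulr0.
Qed.

Lemma gen_inW r : is_ray S r -> inW Rp B (gen r).
Proof. by move=> /(ray_gen pg) [_ _ gN _]; apply: inN_inW. Qed.

(* (i) <-> existence of the duals: A_W is spanned by the delta_rho off sigma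
   exactly when each delta_rho, rho in sigma, is hit by c_W modulo them. *)
Lemma A_sigma_duals : A_sigma_eq_A Rp B S gen s <-> exists m, ray_duals m.
Proof.
split=> [A_eq|[m mdual] y yR].
  apply: ray_duals_choice => r rs.
  have [|c [m [Wm cR c0 ey]]] := A_eq (fun r' => (r' == r)%:R).
    by move=> r' _; apply: Rp_nat.
  by exists m; split => // r' [r'r r's]; rewrite ey ?c0 ?add0r //; split.
pose m0 := \sum_(r <- rays_in s) y r *: m r.
have Wm0 : inWdual Rp B m0.
  rewrite /m0 big_seq; apply: inWdual_sum => // r /mem_rays_in rs; have [rr _] := rs.
  by apply: inWdualZ => //; [apply: yR | apply: (mdual r rs).1].
exists (fun r => y r - rhoN S gen r m0), m0; split => // [r rr|r rs|r _].
- by apply: RpB => //; [apply: yR | apply/Wm0/gen_inW].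
- by rewrite ray_duals_coef // subrr.
- by rewrite subrK.
Qed.

(* (iii) -> (ii): every face of sigma is a cone of the fan. *)
Lemma cond_iii_ii : cond_iii Rp B S gen s -> cond_ii Rp B S gen s.
Proof.
move=> iii T fT nT; have [t et] := fan_face fan fT.
have [u [pu uW u1]] := iii t.
exists u; split => // [x Tx|r rs nrT].
  by apply: pu; split; [apply: (face_sub fT) | apply/et].
apply: u1 => // [[rr fr]]; apply: nrT; split => //.
by apply: is_face_eq fr => // x; rewrite et.
Qed.

(* (ii) -> duals: the functional for the face {0} is 1 on all rays; subtracting
   the functional of the face rho leaves the dual of rho. *)
Lemma cond_ii_duals : cond_ii Rp B S gen s ->
  forall r, ray_of S r sigma -> exists m, ray_dual r m.
Proof.
move=> ii r rs; have [rr fr] := rs; have [er g0 _ _] := ray_gen pg rr.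
have gs r' : ray_of S r' sigma -> sigma (gen r').
  by move=> [rr' fr']; apply: (face_sub fr'); apply: (gen_in pg).
have [|u0 [_ Wu0 u01]] := ii _ (zero_face fan pg rs).
  by move=> e0; move/eqP: g0; apply; apply/e0/gs.
have u0r r' : ray_of S r' sigma -> rhoN S gen r' u0 = 1.
  move=> r's; apply: u01 => // [[rr' fr']]; have [_ g0' _ _] := ray_gen pg rr'.
  by move/eqP: g0'; apply; apply: (face_sub fr'); apply: (gen_in pg).
have [rsig|nrsig] := classic (set_eq (cone_of S r) sigma).
  exists u0; split => // r' r's; rewrite u0r //.
  suff -> : r' = r by rewrite eqxx.
  by apply: (rays_eq fan pg) => //; [case: r's | move=> x /(face_sub r's.2) /rsig].
have [ur [pur Wur ur1]] := ii _ fr nrsig.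
exists (u0 - ur); split => [|r' r's]; first exact: inWdualB.
rewrite /rhoN pairingBr -!/(rhoN S gen r' _) u0r //.
have [->|r'r] := eqVneq r' r; first by rewrite /rhoN pur ?subr0 //; apply: (gen_in pg).
rewrite ur1 ?subrr // => [[rr' fr']]; move/eqP: r'r; apply.
by apply: (rays_eq fan pg) => //; apply: face_sub fr'.
Qed.

(* duals -> (iii): sum the duals of the rays of sigma that are not rays of tau;
   it vanishes on sigma cap tau, which is generated by common rays. *)
Lemma duals_cond_iii : (exists m, ray_duals m) -> cond_iii Rp B S gen s.
Proof.
move=> [m mdual] t; pose a r := (classic_bool (~ ray_of S r (cone_of S t)))%:R : K.
exists (\sum_(r <- rays_in s) a r *: m r); split; last 2 first.
- rewrite big_seq; apply: inWdual_sum => // r /mem_rays_in rs.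
  by apply: inWdualZ => //; [apply: Rp_nat | apply: (mdual r rs).1].
- move=> r rs nrt; rewrite (ray_duals_coef a mdual rs).
  by rewrite /a; case: classic_boolP => // /(_ nrt).
have [j ej] := fan_face fan (fan_meet_face fan s t).1.
move=> x /ej /(cone_rays fan pg); apply: ncone_perp => _ /mapP [r /mem_rays_in rj ->].
have [rr fr] := rj; have [fs ft] := fan_meet_face fan s t.
have face_of i : is_face (Defs.setI sigma (cone_of S t)) (cone_of S i) -> ray_of S r (cone_of S i).
  by move=> fi; split => //; apply: (face_trans_of fi); apply: is_face_eq fr => // y; rewrite ej.
rewrite -[pairing _ _]/(rhoN S gen r _) (ray_duals_coef a mdual (face_of s fs)) /a.
by case: classic_boolP => // /(_ (face_of t ft)).
Qed.

(* duals -> (iv): the generators of the rays of sigma, completed by a basis of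
   the part of W killed by their duals (free since R is a PID), form an
   R-basis of W. *)
Lemma duals_W_regular : principal_ideals Rp ->
  (exists m, ray_duals m) -> W_regular Rp B sigma.
Proof.
move=> Rpid [m mdual]; set rs := rays_in s.
set v := map gen rs; set mv := map m rs.
have rsP i : (i < size rs)%N -> ray_of S (nth s rs i) sigma.
  by move=> il; apply/mem_rays_in/mem_nth.
have dual i j : (i < size v)%N -> (j < size v)%N -> pairing v`_i mv`_j = (i == j)%:R.
  rewrite size_map => il jl; rewrite !(nth_map s) //.
  rewrite [pairing _ _](mdual _ (rsP j jl)).2; last exact: rsP.
  by rewrite nth_uniq // rays_in_uniq.
have vW x : x \in v -> inW Rp B x.
  by move=> /mapP [r /mem_rays_in [rr _] ->]; apply: gen_inW.
have mW x k : inW Rp B x -> Rp (pairing x mv`_k).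
  move=> Wx; have [kl|lk] := ltnP k (size rs).
    by rewrite (nth_map s) //; apply: (mdual _ (rsP k kl)).1.
  by rewrite nth_default ?size_map // pairing0r; apply: Rp0.
pose P' x := inW Rp B x /\ forall j, (j < size v)%N -> pairing x mv`_j = 0.
have [W0 WD WZ] := inW_submodule Rsub Bu.
have [f fP'] : exists f, nbasis Rp P' f.
  apply: (W_submodule_nbasis Rsub Bu Rpid) => [|x []//].
  split.
  - by split => // j _; rewrite pairing0l.
  - move=> x y [Wx x0] [Wy y0]; split => [|j jl]; first exact: WD.
    by rewrite pairingDl x0 ?y0 ?addr0.
  - move=> r x Rr [Wx x0]; split => [|j jl]; first exact: WZ.
    by rewrite pairingZl x0 ?mulr0.
exists (v ++ f); split.
  apply: nbasis_R_basis => //.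
  exact: (nbasis_dual_split Rsub (inW_submodule Rsub Bu) dual vW mW fP').
exists v; split => [x xv|x]; first by rewrite mem_cat xv.
by rewrite cone_ncone; apply: (cone_rays fan pg).
Qed.

Lemma regular_ray_basis_vector e s' : is_R_basis Rp B e -> {subset s' <= e} ->
  set_eq sigma (cone s') ->
  forall r, ray_of S r sigma -> exists2 v, v \in e & exists2 mu, 0 < mu & v = mu *: gen r.
Proof.
move=> eb s'e es' r [rr [u [u0 eu]]]; have [er g0 _ _] := ray_gen pg rr.
have [gs gu] : sigma (gen r) /\ pairing (gen r) u = 0 by apply/eu/(gen_in pg).
have s'u w : w \in s' -> 0 <= pairing w u.
  by move=> ws'; apply/u0/es'/cone_ncone/ncone_mem.
have := ncone_face_support s'u (proj1 (cone_ncone _ _) (proj1 (es' _) gs)) gu.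
case E: [seq h <- s' | pairing h u == 0] => [|v l] gl.
  by move/ncone_nil: gl => g00; move/eqP: g0.
have : v \in [seq h <- s' | pairing h u == 0] by rewrite E mem_head.
rewrite mem_filter => /andP[/eqP vu vs']; exists v; first exact: s'e.
have /er vr : cone_of S r v by apply/eu; split => //; apply/es'/cone_ncone/ncone_mem.
exact: ncone_single_pos (R_basis_nz Rsub eb (s'e _ vs')) vr.
Qed.

(* (iv) -> duals: the dual of rho is mu times the coordinate functional of the
   basis vector mu rho_N; mu lies in R because rho_N is primitive. *)
Lemma W_regular_duals : W_regular Rp B sigma ->
  forall r, ray_of S r sigma -> exists m, ray_dual r m.
Proof.
move=> [e [eb [s' [s'e es']]]] r rs.
have ray_vec := regular_ray_basis_vector eb s'e es'.
have [v ve [mu mu0 ev]] := ray_vec r rs; have [er g0 gN gprim] := ray_gen pg rs.1.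
have il : (index v e < size e)%N by rewrite index_mem.
have [u [Wu uk]] := R_basis_dual Rsub Bu (Ordinal il) eb.
have coord w : w \in e -> pairing w u = (w == v)%:R.
  move=> we; have wl : (index w e < size e)%N by rewrite index_mem.
  have -> : (w == v) = (Ordinal wl == Ordinal il).
    apply/eqP/eqP => [wv|/(congr1 val) /= wv]; first by apply: val_inj; rewrite /= wv.
    by rewrite -(nth_index 0 we) -(nth_index 0 ve) wv.
  by rewrite -uk /= nth_index.
have Rmu : Rp mu.
  by apply: (primitive_multiple_R Rsub Bu gN g0 gprim _ ev); case: eb => + _ _; apply.
exists (mu *: u); split => [|r' r's]; first exact: inWdualZ.
rewrite /rhoN pairingZr; have [->|r'r] := eqVneq r' r.
  have -> : gen r = mu^-1 *: v by rewrite ev scalerA mulVf ?scale1r ?gt_eqF.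
  by rewrite pairingZl coord // eqxx mulr1 mulfV ?gt_eqF.
have [v' v'e [mu' mu0' ev']] := ray_vec r' r's.
have -> : gen r' = mu'^-1 *: v' by rewrite ev' scalerA mulVf ?scale1r ?gt_eqF.
rewrite pairingZl coord // (_ : v' == v = false) ?mulr0 //.
apply/negbTE; apply: contra_neq r'r => v'v.
apply: (rays_eq_gen fan pg rs.1 r's.1 (c := mu / mu')); first by rewrite divr_gt0.
by apply: (scalerI (lt0r_neq0 mu0')); rewrite -ev' v'v ev scalerA mulrCA mulfV ?mulr1 ?gt_eqF.
Qed.

End Equivalences.

Theorem proposition1p260 (K : realFieldType) (n : nat) (Rp : K -> Prop)
  (B : 'M[K]_n) (S : seq (seq 'rV[K]_n)) (gen : 'I_(size S) -> 'rV[K]_n)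
  (s : 'I_(size S)) :
  principal_ideal_subring Rp ->
  B \in unitmx ->
  is_Nfan B S ->
  prim_gens B S gen ->
  (A_sigma_eq_A Rp B S gen s <-> cond_ii Rp B S gen s) /\
  (cond_ii Rp B S gen s <-> cond_iii Rp B S gen s) /\
  (cond_iii Rp B S gen s <-> W_regular Rp B (cone_of S s)).
Proof.
move=> [Rsub Rpid] Bu fan pg.
pose D := exists m, ray_duals Rp B gen s m.
have i_D : A_sigma_eq_A Rp B S gen s <-> D := A_sigma_duals s Rsub pg.
have ii_D (ii : cond_ii Rp B S gen s) : D :=
  ray_duals_choice (cond_ii_duals Rsub fan pg ii).
have D_iii (d : D) : cond_iii Rp B S gen s := duals_cond_iii Rsub fan pg d.
have iii_ii (iii : cond_iii Rp B S gen s) : cond_ii Rp B S gen s := cond_iii_ii fan iii.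
have D_iv (d : D) : W_regular Rp B (cone_of S s) := duals_W_regular Rsub Bu fan pg Rpid d.
have iv_D (iv : W_regular Rp B (cone_of S s)) : D :=
  ray_duals_choice (W_regular_duals Rsub Bu fan pg iv).
split; [|split]; split => h.
- exact: iii_ii (D_iii (proj1 i_D h)).
- exact: proj2 i_D (ii_D h).
- exact: D_iii (ii_D h).
- exact: iii_ii h.
- exact: D_iv (ii_D (iii_ii h)).
- exact: D_iii (iv_D h).
Qed.
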